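(* Let $J$ be a Jordan algebra with unit element $1$ over a field $F$ of characteristic $\neq 2,3$, and let $d$ be a derivation with invertible values of $J$. Then every proper ideal $I$ of $J$ satisfies $d(I) = 0$.
   Context: A Jordan algebra is a commutative algebra satisfying $(x^2,y,x)=0$, where $(a,b,c)=(ab)c-a(bc)$. In a Jordan algebra $J$ with unit $1$, an element $x$ is invertible if there exists $y \in J$ with $xy = 1$ and $x^2 y = x$. A derivation with invertible values of $J$ is a nonzero derivation $d$ of $J$ such that for every $x \in J$, $d(x)$ is either invertible or equal to $0$. *)

(* A (nonassociative) algebra over a field F is represented by
   a vector space V : lmodType F together with a multiplication mul : V -> V -> V
   which is required to be bilinear. *)
From HB Require Import structures.
From mathcomp Require Import all_boot all_order all_algebra.
Set Implicit Arguments. Unset Strict Implicit. Unset Printing Implicit Defensive.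
Import GRing.Theory.
Local Open Scope ring_scope.

Section JordanDefs.
Variables (F : fieldType) (V : lmodType F) (mul : V -> V -> V).

Definition assoc (a b c : V) : V := mul (mul a b) c - mul a (mul b c).

(* mul is F-bilinear (linearity in the second argument follows from
   commutativity, but we state both for clarity). *)
Definition bilinear_mul : Prop :=
  (forall (a : F) (x y z : V), mul (a *: x + y) z = a *: mul x z + mul y z) /\
  (forall (a : F) (x y z : V), mul z (a *: x + y) = a *: mul z x + mul z y).

Definition jordan_algebra_with_unit (one : V) : Prop :=
  [/\ bilinear_mul,
      (forall x y : V, mul x y = mul y x),
      (forall x y : V, assoc (mul x x) y x = 0) &
      (forall x : V, mul one x = x)].

Definition jinvertible (one x : V) : Prop :=
  exists y : V, mul x y = one /\ mul (mul x x) y = x.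

Definition derivation (d : V -> V) : Prop :=
  (forall (a : F) (x y : V), d (a *: x + y) = a *: d x + d y) /\
  (forall x y : V, d (mul x y) = mul (d x) y + mul x (d y)).

Definition derivation_inv_values (one : V) (d : V -> V) : Prop :=
  [/\ derivation d,
      (exists x : V, d x != 0) &
      (forall x : V, jinvertible one (d x) \/ d x = 0)].

(* (two-sided, since mul is commutative) jideal: a subspace closed under
   multiplication by arbitrary elements of the algebra *)
Definition jideal (I : V -> Prop) : Prop :=
  [/\ I 0,
      (forall (a : F) (x y : V), I x -> I y -> I (a *: x + y)) &
      (forall x y : V, I x -> I (mul y x))].

Definition jproper_ideal (I : V -> Prop) : Prop :=
  jideal I /\ exists x : V, ~ I x.

End JordanDefs.
Arguments jordan_algebra_with_unit {F V} mul one.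
Arguments derivation_inv_values {F V} mul one d.
Arguments jproper_ideal {F V} mul I.
Arguments jinvertible {F V} mul one x.
Arguments derivation {F V} mul d.
Arguments jideal {F V} mul I.
Arguments assoc {F V} mul a b c.
Arguments bilinear_mul {F V} mul.

(* An ideal containing an invertible element u (with u v = 1) contains
   1 = v u and hence everything, so d takes no invertible value on a proper
   ideal I.  For x in I, d(x^2) = 2 x d(x) lies in I, so it is 0 and
   x d(x) = 0 (char <> 2).  Differentiating, d(x)^2 = - x d^2(x) lies in I;
   if d(x) were invertible with d(x)^2 v = d(x), then d(x) would lie in I. *)
From HB Require Import structures.
From mathcomp Require Import all_boot all_order all_algebra.
Set Implicit Arguments. Unset Strict Implicit.
Import GRing.Theory.
Local Open Scope ring_scope.

Section Ideals.
Variables (F : fieldType) (V : lmodType F) (mul : V -> V -> V).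
Hypothesis mulC : forall x y : V, mul x y = mul y x.
Variable I : V -> Prop.
Hypothesis idealI : jideal mul I.

Lemma jidealD (x y : V) : I x -> I y -> I (x + y).
Proof.
case: idealI => _ Ilin _ Ix Iy.
by have := Ilin 1 x y Ix Iy; rewrite scale1r.
Qed.

Lemma jidealN (x : V) : I x -> I (- x).
Proof.
case: idealI => I0 Ilin _ Ix.
by have := Ilin (-1) x 0 Ix I0; rewrite addr0 scaleN1r.
Qed.

Lemma jidealMr (x y : V) : I x -> I (mul x y).
Proof. by case: idealI => _ _ Imul Ix; rewrite mulC; apply: Imul. Qed.

Lemma jideal_unit_full (one u : V) :
  (forall x : V, mul one x = x) -> I u -> jinvertible mul one u ->
  forall x : V, I x.
Proof.
move=> mul1 Iu [v [uv _]] x.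
have Ione : I one by rewrite -uv; apply: jidealMr.
by rewrite -(mul1 x); apply: jidealMr.
Qed.

End Ideals.

Section Derivations.
Variables (F : fieldType) (V : lmodType F) (mul : V -> V -> V) (d : V -> V).
Hypothesis mulC : forall x y : V, mul x y = mul y x.
Hypothesis derd : derivation mul d.

Lemma derivation0 : d 0 = 0.
Proof.
case: derd => dlin _; have := dlin 1 0 0; rewrite !scale1r !addr0 => d00.
by apply: (addrI (d 0)); rewrite addr0 -d00.
Qed.

Lemma derivation_sqr (x : V) : d (mul x x) = 2%:R *: mul x (d x).
Proof.
by case: derd => _ dmul; rewrite dmul mulC -mulr2n -scaler_nat.
Qed.

End Derivations.

Theorem lemma2 (F : fieldType) (V : lmodType F) (mul : V -> V -> V) (one : V)
  (d : V -> V) (I : V -> Prop) :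
  2%N \notin [pchar F] -> 3%N \notin [pchar F] ->
  jordan_algebra_with_unit mul one ->
  derivation_inv_values mul one d ->
  jproper_ideal mul I ->
  forall x : V, I x -> d x = 0.
Proof.
move=> char2 _ [_ mulC _ mul1] [derd _ dinv] [idealI [z Nz]] x Ix.
have noninv u : I u -> ~ jinvertible mul one u.
  by move=> Iu /(jideal_unit_full mulC idealI mul1 Iu)/(_ z).
have d_sqr_zero : d (mul x x) = 0.
  have Ixx : I (d (mul x x)).
    have [_ dmul] := derd; rewrite dmul mulC.
    by apply: (jidealD idealI); apply: (jidealMr mulC idealI).
  by case: (dinv (mul x x)) => // /(noninv _ Ixx).
have two_neq0 : (2%:R : F) != 0.
  by apply: contra char2 => two0; rewrite inE /= two0.
have x_dx : mul x (d x) = 0.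
  move/eqP: d_sqr_zero; rewrite (derivation_sqr mulC derd) scaler_eq0.
  by rewrite (negbTE two_neq0) => /eqP.
case: (dinv x) => // dx_inv; exfalso.
have [v [_ dx2v]] := dx_inv.
have Idx2 : I (mul (d x) (d x)).
  have [_ dmul] := derd; move: (dmul x (d x)).
  rewrite x_dx (derivation0 derd) => /eqP; rewrite eq_sym addr_eq0 => /eqP ->.
  by apply: (jidealN idealI); apply: (jidealMr mulC idealI).
have Idx : I (d x) by rewrite -dx2v; apply: (jidealMr mulC idealI).
exact: noninv _ Idx dx_inv.
Qed.
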